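(* Let $\mathfrak{g}$ be a finite-dimensional Leibniz algebra with free presentation $0\to\mathfrak{r}\to\mathfrak{f}\xrightarrow{\rho}\mathfrak{g}\to0$, let $\mathfrak{n}$ be a two-sided ideal of $\mathfrak{g}$, and let $\mathfrak{s}$ be a two-sided ideal of $\mathfrak{f}$ with $\rho(\mathfrak{s})=\mathfrak{n}$. Then $$\dim\mathcal{M}^{\mathrm{Lie}}(\mathfrak{g}/\mathfrak{n})+\dim\frac{\mathfrak{r}\cap[\mathfrak{f},\mathfrak{s}]_{\mathrm{Lie}}}{[\mathfrak{f},\mathfrak{r}]_{\mathrm{Lie}}\cap[\mathfrak{f},\mathfrak{s}]_{\mathrm{Lie}}}=\dim\mathcal{M}^{\mathrm{Lie}}(\mathfrak{g})+\dim\frac{\mathfrak{n}\cap[\mathfrak{g},\mathfrak{g}]_{\mathrm{Lie}}}{[\mathfrak{g},\mathfrak{n}]_{\mathrm{Lie}}}.$$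
   Context: Fix a field $\mathbb{K}$ with $\frac12\in\mathbb{K}$. A Leibniz algebra is a $\mathbb{K}$-vector space with a bilinear bracket satisfying $[x,[y,z]]=[[x,y],z]-[[x,z],y]$. For two-sided ideals $\mathfrak{m},\mathfrak{n}$, $[\mathfrak{m},\mathfrak{n}]_{\mathrm{Lie}}$ is the subspace spanned by all $[m,n]+[n,m]$. A free presentation is $0\to\mathfrak{r}\to\mathfrak{f}\to\mathfrak{g}\to0$ with $\mathfrak{f}$ free Leibniz. The Schur $\mathrm{Lie}$-multiplier is $\mathcal{M}^{\mathrm{Lie}}(\mathfrak{g})=\frac{\mathfrak{r}\cap[\mathfrak{f},\mathfrak{f}]_{\mathrm{Lie}}}{[\mathfrak{f},\mathfrak{r}]_{\mathrm{Lie}}}$, independent of the presentation up to isomorphism. *)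

From HB Require Import structures.
From mathcomp Require Import all_boot all_algebra.
Set Implicit Arguments. Unset Strict Implicit. Unset Printing Implicit Defensive.
Import GRing.Theory.
Local Open Scope ring_scope.

Definition is_leibniz {K : fieldType} {V : lmodType K} (br : V -> V -> V) : Prop :=
  (forall (a : K) (x y z : V), br (a *: x + y) z = a *: br x z + br y z) /\
  (forall (a : K) (x y z : V), br x (a *: y + z) = a *: br x y + br x z) /\
  (forall x y z : V, br x (br y z) = br (br x y) z - br (br x z) y).

Definition is_hom {K : fieldType} {V W : lmodType K}
  (brV : V -> V -> V) (brW : W -> W -> W) (f : V -> W) : Prop :=
  (forall (a : K) (x y : V), f (a *: x + y) = a *: f x + f y) /\
  (forall x y : V, f (brV x y) = brW (f x) (f y)).

Definition is_free_leibniz {K : fieldType} {F : lmodType K} (brF : F -> F -> F) : Prop :=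
  is_leibniz brF /\
  exists (X : Type) (i : X -> F),
    forall (W : lmodType K) (brW : W -> W -> W), is_leibniz brW ->
    forall phi : X -> W,
      (exists psi : F -> W, is_hom brF brW psi /\ forall x, psi (i x) = phi x) /\
      (forall psi1 psi2 : F -> W, is_hom brF brW psi1 -> is_hom brF brW psi2 ->
         (forall x, psi1 (i x) = psi2 (i x)) -> forall y, psi1 y = psi2 y).

Definition is_subspace {K : fieldType} {V : lmodType K} (S : V -> Prop) : Prop :=
  S 0 /\ forall (a : K) (x y : V), S x -> S y -> S (a *: x + y).

Definition is_ideal {K : fieldType} {V : lmodType K} (br : V -> V -> V) (S : V -> Prop) : Prop :=
  is_subspace S /\ forall x m : V, S m -> S (br x m) /\ S (br m x).

Definition span {K : fieldType} {V : lmodType K} (S : V -> Prop) : V -> Prop :=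
  fun x => exists (n : nat) (c : 'I_n -> K) (v : 'I_n -> V),
    (forall i, S (v i)) /\ x = \sum_(i < n) c i *: v i.

Definition lie_comm {K : fieldType} {V : lmodType K} (br : V -> V -> V)
  (M N : V -> Prop) : V -> Prop :=
  span (fun y => exists m n, M m /\ N n /\ y = br m n + br n m).

Definition fullset {T : Type} : T -> Prop := fun _ => True.
Definition meet {T : Type} (A B : T -> Prop) : T -> Prop := fun x => A x /\ B x.

(* dim (U / W) = d : d elements of U whose classes mod W form a basis of U/W *)
Definition has_qdim {K : fieldType} {V : lmodType K} (U W : V -> Prop) (d : nat) : Prop :=
  exists v : 'I_d -> V,
    (forall i, U (v i)) /\
    (forall c : 'I_d -> K, W (\sum_(i < d) c i *: v i) -> forall i, c i = 0) /\
    (forall u, U u -> exists c : 'I_d -> K, W (u - \sum_(i < d) c i *: v i)).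

(* dim M^Lie computed from the free presentation f with kernel r *)
Definition schur_lie_dim {K : fieldType} {F : lmodType K} (brF : F -> F -> F)
  (r : F -> Prop) (d : nat) : Prop :=
  has_qdim (meet r (lie_comm brF fullset fullset)) (lie_comm brF fullset r) d.

From Pilot Require Import Defs.
From HB Require Import structures.
From mathcomp Require Import all_boot all_algebra.
From Stdlib Require Import Classical IndefiniteDescription.
Set Implicit Arguments. Unset Strict Implicit. Unset Printing Implicit Defensive.
Import GRing.Theory.
Local Open Scope ring_scope.

(** Everything happens inside f. Put L = [f,f]_Lie, R = r ∩ L, T = ρ⁻¹(n) = r + s and
    U = T ∩ L. The multiplier does not depend on the presentation (compare two free
    presentations through lifts between the free algebras), and f → g/n is a free
    presentation with kernel T and [f,T]_Lie = [f,r]_Lie + [f,s]_Lie, so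
    M^Lie(g/n) ≅ U/([f,r] + [f,s]), while M^Lie(g) = R/[f,r]. These two quotients are
    filtered by
      [f,r] ⊆ [f,r] + (r ∩ [f,s]) ⊆ R   and   [f,r] + [f,s] ⊆ [f,r] + [f,s] + R ⊆ U.
    The lower step of the first chain is (r ∩ [f,s])/([f,r] ∩ [f,s]) by the second
    isomorphism theorem, the upper step of the second one is (n ∩ [g,g])/[g,n] via ρ,
    and the two remaining steps are isomorphic by the modular law. Adding dimensions
    along the chains gives the identity; all quotients are finite-dimensional because
    L/[f,r] is spanned by the brackets of lifts of a basis of g. *)

Section Linear.
Variables (K : fieldType) (V W : lmodType K).

Definition is_linear (f : V -> W) : Prop :=
  forall (a : K) (x y : V), f (a *: x + y) = a *: f x + f y.

Variables (f : V -> W) (Hf : is_linear f).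

Lemma is_linear0 : f 0 = 0.
Proof.
have := Hf 1 0 0; rewrite !scale1r !addr0 => f00.
by apply: (@addrI _ (f 0)); rewrite addr0 -f00.
Qed.

Lemma is_linearD x y : f (x + y) = f x + f y.
Proof. by have := Hf 1 x y; rewrite !scale1r. Qed.

Lemma is_linearZ a x : f (a *: x) = a *: f x.
Proof. by have := Hf a x 0; rewrite !addr0 is_linear0 addr0. Qed.

Lemma is_linearB x y : f (x - y) = f x - f y.
Proof. by rewrite -scaleN1r is_linearD is_linearZ scaleN1r. Qed.

Lemma is_linear_comb n (c : 'I_n -> K) (v : 'I_n -> V) :
  f (\sum_(i < n) c i *: v i) = \sum_(i < n) c i *: f (v i).
Proof. by elim/big_rec2: _ => [|i y1 y2 _ <-]; [exact: is_linear0 | rewrite Hf]. Qed.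

End Linear.

Section Subspace.
Variables (K : fieldType) (V : lmodType K) (S : V -> Prop) (HS : is_subspace S).

Lemma subspace0 : S 0.
Proof. by case: HS. Qed.

Lemma subspaceD x y : S x -> S y -> S (x + y).
Proof. by case: HS => _ HSlin Sx Sy; have := HSlin 1 x y Sx Sy; rewrite scale1r. Qed.

Lemma subspaceZ a x : S x -> S (a *: x).
Proof. by case: HS => S0 HSlin Sx; have := HSlin a x 0 Sx S0; rewrite addr0. Qed.

Lemma subspaceN x : S x -> S (- x).
Proof. by rewrite -scaleN1r; apply: subspaceZ. Qed.

Lemma subspaceB x y : S x -> S y -> S (x - y).
Proof. by move=> Sx Sy; apply: subspaceD => //; apply: subspaceN. Qed.

Lemma subspace_comb n (c : 'I_n -> K) (v : 'I_n -> V) :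
  (forall i, S (v i)) -> S (\sum_(i < n) c i *: v i).
Proof.
move=> Sv; elim/big_ind: _ => [|x y|i _]; [exact: subspace0|exact: subspaceD|].
exact: subspaceZ.
Qed.

End Subspace.

Definition fam_cat {T : Type} {a b : nat} (f : 'I_a -> T) (g : 'I_b -> T)
  (k : 'I_(a + b)) : T :=
  match split k with inl i => f i | inr j => g j end.

Lemma sum_fam_cat (K : fieldType) (V : lmodType K) a b (c : 'I_a -> K) (d : 'I_b -> K)
  (v : 'I_a -> V) (w : 'I_b -> V) :
  \sum_(k < a + b) fam_cat c d k *: fam_cat v w k =
  \sum_(i < a) c i *: v i + \sum_(j < b) d j *: w j.
Proof.
rewrite big_split_ord /fam_cat; congr (_ + _); apply: eq_bigr => i _.
  by rewrite (unsplitK (inl i) : split (lshift b i) = inl i).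
by rewrite (unsplitK (inr i) : split (rshift a i) = inr i).
Qed.

Lemma fam_cat_split (T : Type) a b (c : 'I_(a + b) -> T) k :
  fam_cat (fun i => c (lshift b i)) (fun j => c (rshift a j)) k = c k.
Proof. by rewrite /fam_cat -[in RHS](splitK k); case: split. Qed.

Definition addsp {K : fieldType} {V : lmodType K} (S T : V -> Prop) : V -> Prop :=
  fun x => exists a b, S a /\ T b /\ x = a + b.

Section SubspaceConstructions.
Variables (K : fieldType) (V : lmodType K).
Implicit Types (S T P : V -> Prop).

Lemma subspace_meet S T : is_subspace S -> is_subspace T -> is_subspace (meet S T).
Proof.
move=> HS HT; split; first by split; apply: subspace0.
by move=> a x y [Sx Tx] [Sy Ty]; split; [apply HS | apply HT].
Qed.

Lemma subspace_ker (W : lmodType K) (f : V -> W) :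
  is_linear f -> is_subspace (fun x => f x = 0).
Proof.
move=> Hf; split=> [|a x y fx fy]; first exact: is_linear0.
by rewrite Hf fx fy scaler0 addr0.
Qed.

Lemma subspace_addsp S T : is_subspace S -> is_subspace T -> is_subspace (addsp S T).
Proof.
move=> HS HT; split.
  by exists 0, 0; rewrite addr0; do !split; apply: subspace0.
move=> a _ _ [x1 [x2 [Sx1 [Tx2 ->]]]] [y1 [y2 [Sy1 [Ty2 ->]]]].
exists (a *: x1 + y1), (a *: x2 + y2); split; first by apply HS.
by split; [apply HT | rewrite scalerDr addrACA].
Qed.

Lemma addsp_meml S T x : is_subspace T -> S x -> addsp S T x.
Proof. by move=> HT Sx; exists x, 0; rewrite addr0; split; [|split; first exact: subspace0]. Qed.

Lemma addsp_memr S T x : is_subspace S -> T x -> addsp S T x.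
Proof. by move=> HS Tx; exists 0, x; rewrite add0r; split; [exact: subspace0|]. Qed.

Lemma subspace_preimage (W : lmodType K) (f : V -> W) (S : W -> Prop) :
  is_linear f -> is_subspace S -> is_subspace (fun x => S (f x)).
Proof.
move=> Hf HS; split=> [|a x y Sfx Sfy]; first by rewrite is_linear0 //; exact: subspace0.
by rewrite Hf; apply HS.
Qed.

Lemma subspace_image (W : lmodType K) (f : V -> W) S :
  is_linear f -> is_subspace S -> is_subspace (fun y => exists x, S x /\ f x = y).
Proof.
move=> Hf HS; split=> [|a _ _ [x [Sx <-]] [y [Sy <-]]].
  by exists 0; split; [exact: subspace0 | exact: is_linear0].
by exists (a *: x + y); split; [apply HS | rewrite Hf].
Qed.

Lemma span_mem P x : P x -> Defs.span P x.
Proof. by exists 1%N, (fun=> 1), (fun=> x); rewrite big_ord1 scale1r. Qed.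

Lemma span_min P S : is_subspace S -> (forall x, P x -> S x) ->
  forall x, Defs.span P x -> S x.
Proof. by move=> HS PS x [n [c [v [Pv ->]]]]; apply: subspace_comb => // i; apply: PS. Qed.

Lemma span_subspace P : is_subspace (Defs.span P).
Proof.
split; first by exists 0%N, (fun=> 0), (fun=> 0); split; [case | rewrite big_ord0].
move=> a _ _ [n [c [v [Pv ->]]]] [m [d [w [Pw ->]]]].
exists (n + m)%N, (fam_cat (fun i => a * c i) d), (fam_cat v w); split.
  by move=> k; rewrite /fam_cat; case: split.
rewrite sum_fam_cat scaler_sumr; congr (_ + _).
by apply: eq_bigr => i _; rewrite scalerA.
Qed.

End SubspaceConstructions.

Section QuotientDimension.
Variables (K : fieldType) (V : lmodType K).
Implicit Types (U W : V -> Prop).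

Definition span_mod W n (x : 'I_n -> V) : V -> Prop :=
  fun u => exists c : 'I_n -> K, W (u - \sum_(i < n) c i *: x i).

Definition indep_mod W n (x : 'I_n -> V) : Prop :=
  forall c : 'I_n -> K, W (\sum_(i < n) c i *: x i) -> forall i, c i = 0.

Lemma span_mod_subspace W n (x : 'I_n -> V) :
  is_subspace W -> is_subspace (span_mod W x).
Proof.
move=> HW; split.
  by exists (fun=> 0); rewrite big1 ?subr0 => [|i _]; [exact: subspace0 | rewrite scale0r].
move=> a u v [c Wc] [d Wd]; exists (fun i => a * c i + d i).
have -> : \sum_(i < n) (a * c i + d i) *: x i =
    a *: \sum_(i < n) c i *: x i + \sum_(i < n) d i *: x i.
  by rewrite scaler_sumr -big_split; apply: eq_bigr => i _; rewrite scalerDl scalerA.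
by rewrite opprD addrACA -scalerBr; apply HW.
Qed.

Lemma span_mod_recr W k (x : 'I_k.+1 -> V) u :
  span_mod W x u <->
  exists a, span_mod W (fun i : 'I_k => x (widen_ord (leqnSn k) i)) (u - a *: x ord_max).
Proof.
split=> [[c Wc] | [a [c Wc]]].
  exists (c ord_max), (fun i => c (widen_ord (leqnSn k) i)).
  by move: Wc; rewrite big_ord_recr /= opprD addrA addrAC.
exists (fun i => if unlift ord_max i is Some j then c j else a).
rewrite big_ord_recr /= unlift_none opprD addrA addrAC.
congr W: Wc; congr (_ - _); apply: eq_bigr => i _.
have -> : widen_ord (leqnSn k) i = lift ord_max i by apply: ord_inj; rewrite lift_max.
by rewrite liftK.
Qed.

Lemma span_mod_comb W (HW : is_subspace W) a b (v : 'I_a -> V) (w : 'I_b -> V)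
  (m : 'I_b -> 'I_a -> K) (z : 'I_b -> K) :
  (forall j, W (w j - \sum_(i < a) m j i *: v i)) ->
  W (\sum_(j < b) z j *: w j - \sum_(i < a) (\sum_(j < b) z j * m j i) *: v i).
Proof.
move=> Wm; have := subspace_comb HW z Wm.
under eq_bigr do rewrite scalerBr scaler_sumr.
rewrite sumrB exchange_big /=; congr W; congr (_ - _); apply: eq_bigr => i _.
by rewrite scaler_suml; apply: eq_bigr => j _; rewrite scalerA.
Qed.

(* A nonzero left kernel vector of the (b x a) coefficient matrix gives a dependence. *)
Lemma span_mod_card_le W (HW : is_subspace W) a b (v : 'I_a -> V) (w : 'I_b -> V) :
  (forall j, span_mod W v (w j)) -> indep_mod W w -> (b <= a)%N.
Proof.
move=> wv indep_w; have [m Wm] := functional_choice _ wv.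
rewrite leqNgt; apply/negP => ltab.
pose M : 'M[K]_(b, a) := \matrix_(j, i) m j i.
have : ~~ row_free M by rewrite /row_free ltn_eqF // (leq_ltn_trans (rank_leq_col M)).
rewrite -kermx_eq0 => /rowV0Pn [z /sub_kermxP zM /negP]; apply; apply/eqP/rowP => j.
rewrite mxE; apply: (indep_w (fun j => z 0 j)).
have zM0 i : \sum_(j < b) z 0 j * m j i = 0.
  transitivity ((z *m M) 0 i); last by rewrite zM mxE.
  by rewrite mxE; apply: eq_bigr => j' _; rewrite /M mxE.
have := span_mod_comb HW (fun j => z 0 j) Wm.
by under [X in _ - X]eq_bigr do rewrite zM0 scale0r; rewrite big1_eq subr0.
Qed.

Lemma has_qdim_uniq U W a b :
  is_subspace W -> has_qdim U W a -> has_qdim U W b -> a = b.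
Proof.
move=> HW [v [Uv [indep_v span_v]]] [w [Uw [indep_w span_w]]].
apply/eqP; rewrite eqn_leq.
rewrite (span_mod_card_le HW (fun i => span_w _ (Uv i)) indep_v).
by rewrite (span_mod_card_le HW (fun j => span_v _ (Uw j)) indep_w).
Qed.

Lemma has_qdim_iso (V' : lmodType K) (f : V -> V') U W (U' W' : V' -> Prop) :
  is_linear f -> is_subspace U -> is_subspace W' ->
  (forall u, U u -> U' (f u)) ->
  (forall u', U' u' -> exists u, U u /\ W' (u' - f u)) ->
  (forall u, U u -> W' (f u) <-> W u) ->
  forall d, has_qdim U W d <-> has_qdim U' W' d.
Proof.
move=> Hf HU HW' fU f_onto fW d; split.
  case=> v [Uv [indep_v span_v]]; exists (fun i => f (v i)); split; first by move=> i; apply: fU.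
  split=> [c W'c | u' U'u'].
    by apply: indep_v; apply/fW; [exact: (subspace_comb HU) | rewrite is_linear_comb].
  have [u [Uu W'u]] := f_onto u' U'u'; have [c Wc] := span_v u Uu; exists c.
  have : W' (f (u - \sum_(i < d) c i *: v i)).
    by apply/fW => //; apply: (subspaceB HU) => //; exact: (subspace_comb HU).
  rewrite is_linearB // is_linear_comb // => W'fu.
  by have := subspaceD HW' W'u W'fu; rewrite addrA subrK.
case=> v' [U'v' [indep_v' span_v']].
have [v Hv] := functional_choice _ (fun i => f_onto _ (U'v' i)).
have Uv i : U (v i) by case: (Hv i).
have W'comb c : W' (\sum_(i < d) c i *: v' i - f (\sum_(i < d) c i *: v i)).
  rewrite is_linear_comb // -sumrB.
  by under eq_bigr do rewrite -scalerBr; apply: (subspace_comb HW') => i; case: (Hv i).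
exists v; split=> //; split=> [c Wc | u Uu].
  apply: indep_v'; have W'fc : W' (f (\sum_(i < d) c i *: v i)).
    by apply/fW => //; exact: (subspace_comb HU).
  by have := subspaceD HW' (W'comb c) W'fc; rewrite subrK.
have [c W'c] := span_v' _ (fU _ Uu); exists c.
apply/fW; first by apply: (subspaceB HU) => //; exact: (subspace_comb HU).
by rewrite is_linearB //; have := subspaceD HW' W'c (W'comb c); rewrite addrA subrK.
Qed.

Lemma has_qdim_eq U U' W W' :
  is_subspace U -> is_subspace W' ->
  (forall u, U u <-> U' u) -> (forall u, U u -> W' u <-> W u) ->
  forall d, has_qdim U W d <-> has_qdim U' W' d.
Proof.
move=> HU HW' UU' WW'; apply: (@has_qdim_iso V id) => // [u /UU' //|u' /UU' Uu'].
by exists u'; rewrite subrr; split; [|exact: subspace0].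
Qed.

(* The second isomorphism theorem: [X / (X ∩ W) ≅ (W + X) / W]. *)
Lemma has_qdim_addsp X W :
  is_subspace X -> is_subspace W ->
  forall d, has_qdim X W d <-> has_qdim (addsp W X) W d.
Proof.
move=> HX HW; apply: (@has_qdim_iso V id) => // [u Xu|_ [w [x [Ww [Xx ->]]]]].
  exact: addsp_memr.
by exists x; rewrite addrK.
Qed.

Lemma has_qdim_add U M W a b :
  is_subspace U -> is_subspace M ->
  (forall x, M x -> U x) -> (forall x, U x -> W x -> M x) ->
  has_qdim U M a -> has_qdim M W b -> has_qdim U W (a + b).
Proof.
move=> HU HM MU UWM [v [Uv [indep_v span_v]]] [w [Mw [indep_w span_w]]].
exists (fam_cat v w); split=> [k|]; first by rewrite /fam_cat; case: split => i; [|apply: MU].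
split=> [c | u Uu]; last first.
  have [c Mc] := span_v u Uu; have [d Wd] := span_w _ Mc.
  by exists (fam_cat c d); rewrite sum_fam_cat opprD addrA.
under eq_bigr do rewrite -(fam_cat_split c); rewrite sum_fam_cat.
set c1 := fun i => c (lshift b i); set c2 := fun j => c (rshift a j) => Wc.
have Mc2 := subspace_comb HM c2 Mw.
have c1_0 : forall i, c1 i = 0.
  apply: indep_v; have Uc1 := subspace_comb HU c1 Uv.
  have Mc12 := UWM _ (subspaceD HU Uc1 (MU _ Mc2)) Wc.
  by have := subspaceB HM Mc12 Mc2; rewrite addrK.
have c2_0 : forall j, c2 j = 0.
  by apply: indep_w; move: Wc; rewrite big1 ?add0r // => i _; rewrite -/(c1 i) c1_0 scale0r.
by move=> k; rewrite -fam_cat_split /fam_cat; case: split.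
Qed.

Lemma has_qdim_adjoin U S x y :
  is_subspace U -> is_subspace S -> U y -> ~ S y ->
  (forall u, U u -> exists a, S (u - a *: x)) -> has_qdim U (meet U S) 1.
Proof.
move=> HU HS Uy notSy Sx; exists (fun=> y); split=> //; split.
  move=> c; rewrite big_ord1 => -[_ Scy] i; rewrite (ord1 i).
  have [//|nz] := eqVneq (c ord0) 0; case: notSy.
  by have := subspaceZ HS (c ord0)^-1 Scy; rewrite scalerA mulVf // scale1r.
move=> u Uu; have [e Se] := Sx u Uu; have [c Sc] := Sx y Uy.
have nz_c : c != 0 by apply/eqP => c0; apply: notSy; move: Sc; rewrite c0 scale0r subr0.
exists (fun=> e / c); rewrite big_ord1; split; first by apply: subspaceB => //; exact: subspaceZ.
have := subspaceB HS Se (subspaceZ HS (e / c) Sc).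
by rewrite scalerBr scalerA mulfVK // opprB addrA subrK.
Qed.

Lemma has_qdim_exists k (x : 'I_k -> V) U W :
  is_subspace U -> is_subspace W -> (forall u, U u -> span_mod W x u) ->
  exists d, has_qdim U W d.
Proof.
elim: k x U => [|k IHk] x U HU HW span_x.
  exists 0%N, (fun=> 0); split; first by case.
  split=> [c _ [] // | u Uu].
  by have [c Wc] := span_x u Uu; exists c; rewrite !big_ord0 in Wc *.
pose x' i := x (widen_ord (leqnSn k) i).
pose U' := meet U (span_mod W x').
have HS' := span_mod_subspace x' HW.
have HU' : is_subspace U' by exact: subspace_meet.
have [d' Hd'] := IHk x' U' HU' HW (fun u => @proj2 _ _).
have [[y [Uy notS'y]] | U'U] := classic (exists y, U y /\ ~ span_mod W x' y).
  exists (1 + d')%N; apply: (has_qdim_add HU HU' _ _ _ Hd') => [u [] //|u Uu Wu|].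
    split=> //; exists (fun=> 0).
    by rewrite big1 ?subr0 // => i _; rewrite scale0r.
  by apply: (has_qdim_adjoin (x := x ord_max) HU HS' Uy notS'y) => u /span_x /span_mod_recr.
exists d'; apply: (has_qdim_eq HU' HW _ _ d').1 Hd' => // u.
by split=> [[] // | Uu]; split=> //; apply: NNPP => notS'u; apply: U'U; exists u.
Qed.

End QuotientDimension.

Section LeibnizAlgebra.
Variables (K : fieldType) (V : lmodType K) (br : V -> V -> V) (HL : is_leibniz br).
Implicit Types (M N T : V -> Prop).

Lemma is_linear_brl z : is_linear (br^~ z).
Proof. by case: HL => brl _ a x y; apply: brl. Qed.

Lemma is_linear_brr z : is_linear (br z).
Proof. by case: HL => _ [brr _] a x y; apply: brr. Qed.

Definition symbr (x y : V) : V := br x y + br y x.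

Lemma symbrC x y : symbr x y = symbr y x.
Proof. exact: addrC. Qed.

Lemma is_linear_symbrl z : is_linear (symbr^~ z).
Proof.
move=> a x y; rewrite /symbr (is_linear_brl z) (is_linear_brr z).
by rewrite addrACA -scalerDr.
Qed.

Lemma is_linear_symbrr z : is_linear (symbr z).
Proof. by move=> a x y; rewrite !(symbrC z); apply: is_linear_symbrl. Qed.

Lemma symbr_comb m n (a : 'I_m -> K) (b : 'I_n -> K) (x : 'I_m -> V) (y : 'I_n -> V) :
  symbr (\sum_(i < m) a i *: x i) (\sum_(j < n) b j *: y j) =
  \sum_(i < m) \sum_(j < n) (a i * b j) *: symbr (x i) (y j).
Proof.
rewrite (is_linear_comb (is_linear_symbrl _)); apply: eq_bigr => i _.
rewrite (is_linear_comb (is_linear_symbrr _)).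
by rewrite scaler_sumr; apply: eq_bigr => j _; rewrite scalerA.
Qed.

Lemma lie_comm_subspace M N : is_subspace (lie_comm br M N).
Proof. exact: span_subspace. Qed.

Lemma lie_comm_mem M N m n : M m -> N n -> lie_comm br M N (symbr m n).
Proof. by move=> Mm Nn; apply: span_mem; exists m, n. Qed.

Lemma lie_comm_memC M N m n : M m -> N n -> lie_comm br M N (symbr n m).
Proof. by rewrite symbrC; apply: lie_comm_mem. Qed.

Lemma lie_comm_mono M N M' N' :
  (forall x, M x -> M' x) -> (forall x, N x -> N' x) ->
  forall x, lie_comm br M N x -> lie_comm br M' N' x.
Proof.
move=> MM' NN'; apply: span_min; first exact: lie_comm_subspace.
by move=> _ [m [n [Mm [Nn ->]]]]; apply: lie_comm_mem; auto.
Qed.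

Lemma lie_comm_ideal M T : is_ideal br T -> forall x, lie_comm br M T x -> T x.
Proof.
case=> HT T_ideal; apply: span_min => // _ [m [t [_ [Tt ->]]]].
by have [? ?] := T_ideal m t Tt; apply: subspaceD.
Qed.

Lemma lie_comm_shift T m n t t' : T t -> T t' ->
  lie_comm br fullset T (symbr (m + t) (n + t') - symbr m n).
Proof.
move=> Tt Tt'; rewrite (is_linearD (is_linear_symbrl _)) (is_linearD (is_linear_symbrr m)).
rewrite -(addrA (symbr m n)) (addrC (symbr m n)) addrK.
by apply: subspaceD; [exact: lie_comm_subspace | exact: lie_comm_mem | exact: lie_comm_memC].
Qed.

End LeibnizAlgebra.

Section Homomorphism.
Variables (K : fieldType) (V W : lmodType K) (brV : V -> V -> V) (brW : W -> W -> W).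
Variables (f : V -> W) (Hf : is_hom brV brW f).

Lemma hom_symbr x y : f (symbr brV x y) = symbr brW (f x) (f y).
Proof. by rewrite /symbr (is_linearD Hf.1) !Hf.2. Qed.

Lemma lie_comm_hom M N (M' N' : W -> Prop) :
  (forall x, M x -> M' (f x)) -> (forall x, N x -> N' (f x)) ->
  forall x, lie_comm brV M N x -> lie_comm brW M' N' (f x).
Proof.
move=> MM' NN'; apply: span_min.
  exact: (subspace_preimage Hf.1 (lie_comm_subspace _ _ _)).
by move=> _ [m [n [Mm [Nn ->]]]]; rewrite hom_symbr; apply: lie_comm_mem; auto.
Qed.

Lemma lie_comm_hom_lift M N (M' N' : W -> Prop) :
  (forall y, M' y -> exists x, M x /\ f x = y) ->
  (forall y, N' y -> exists x, N x /\ f x = y) ->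
  forall y, lie_comm brW M' N' y -> exists x, lie_comm brV M N x /\ f x = y.
Proof.
move=> MM' NN'; apply: span_min; first exact: (subspace_image Hf.1 (lie_comm_subspace _ _ _)).
move=> _ [m' [n' [/MM' [m [Mm <-]] [/NN' [n [Nn <-]] ->]]]].
by exists (symbr brV m n); rewrite hom_symbr; split=> //; apply: lie_comm_mem.
Qed.

Lemma ker_hom_ideal : is_leibniz brW -> is_ideal brV (fun x => f x = 0).
Proof.
move=> HW; split=> [|x m fm]; first exact: subspace_ker Hf.1.
rewrite !Hf.2 fm; split; first exact: is_linear0 (is_linear_brr HW _).
exact: is_linear0 (is_linear_brl HW _).
Qed.

End Homomorphism.

Lemma hom_comp (K : fieldType) (U V W : lmodType K) (brU : U -> U -> U) (brV : V -> V -> V)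
  (brW : W -> W -> W) (f : U -> V) (g : V -> W) :
  is_hom brU brV f -> is_hom brV brW g -> is_hom brU brW (fun x => g (f x)).
Proof. by move=> [fl fb] [gl gb]; split=> [a x y|x y]; rewrite ?fl ?gl ?fb ?gb. Qed.

Lemma lie_comm_hom_congr (K : fieldType) (V : lmodType K) (br : V -> V -> V) (T : V -> Prop)
  (h : V -> V) :
  is_leibniz br -> is_hom br br h -> (forall x, T (h x - x)) ->
  forall x, lie_comm br fullset fullset x -> lie_comm br fullset T (h x - x).
Proof.
move=> HL Hh hT; apply: span_min.
  apply: (subspace_preimage (f := fun x => h x - x)); last exact: lie_comm_subspace.
  by move=> a x y; rewrite Hh.1 opprD addrACA -scalerBr.
move=> _ [m [n [_ [_ ->]]]]; rewrite (hom_symbr Hh).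
by have := lie_comm_shift HL m n (hT m) (hT n); rewrite !subrKC.
Qed.

Lemma free_lift (K : fieldType) (F W Q : lmodType K) (brF : F -> F -> F) (brW : W -> W -> W)
  (brQ : Q -> Q -> Q) (p : W -> Q) (g : F -> Q) :
  is_free_leibniz brF -> is_leibniz brW -> is_leibniz brQ ->
  is_hom brW brQ p -> (forall q, exists w, p w = q) -> is_hom brF brQ g ->
  exists a : F -> W, is_hom brF brW a /\ forall x, p (a x) = g x.
Proof.
move=> [_ [X [i univ]]] HW HQ Hp p_onto Hg.
have [phi Hphi] := functional_choice _ (fun x => p_onto (g (i x))).
have [[a [Ha ai]] _] := univ W brW HW phi; exists a; split=> //.
have [_ uniq] := univ Q brQ HQ (fun x => g (i x)).
by apply: uniq => // [|x]; [exact: hom_comp Ha Hp | rewrite ai Hphi].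
Qed.

Lemma lie_comm_fin_span (K : fieldType) (F : lmodType K) (G : vectType K)
  (brF : F -> F -> F) (brG : G -> G -> G) (rho : F -> G) :
  is_leibniz brF -> is_hom brF brG rho -> (forall y, exists x, rho x = y) ->
  exists k (x : 'I_k -> F), forall u, lie_comm brF fullset fullset u ->
    span_mod (lie_comm brF fullset (fun x => rho x = 0)) x u.
Proof.
move=> HL Hrho rho_onto.
pose n := \dim (fullv : {vspace G}); pose bv := vbasis (fullv : {vspace G}).
have [e rho_e] := functional_choice _ (fun i : 'I_n => rho_onto bv`_i).
pose co a i := coord bv i (rho a).
pose g a := \sum_(i < n) co a i *: e i.
have rho_co a : rho (a - g a) = 0.
  rewrite (is_linearB Hrho.1) (is_linear_comb Hrho.1).
  by under eq_bigr do rewrite rho_e; rewrite -coord_vbasis ?subrr // memvf.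
exists #|{: 'I_n * 'I_n}|, (fun t => symbr brF (e (enum_val t).1) (e (enum_val t).2)).
apply: span_min; first exact/span_mod_subspace/lie_comm_subspace.
move=> _ [a [b [_ [_ ->]]]].
exists (fun t => co a (enum_val t).1 * co b (enum_val t).2).
pose F2 i j := (co a i * co b j) *: symbr brF (e i) (e j).
rewrite -(big_enum_val (A := predT) (fun p => F2 p.1 p.2)) (eq_bigl xpredT) //=.
rewrite -(pair_bigA _ F2) -symbr_comb //.
have := lie_comm_shift HL (T := fun x => rho x = 0) (g a) (g b) (rho_co a) (rho_co b).
by rewrite !subrKC.
Qed.

Lemma schur_lie_dim_presentation (K : fieldType) (F1 F2 Q : lmodType K)
  (br1 : F1 -> F1 -> F1) (br2 : F2 -> F2 -> F2) (brQ : Q -> Q -> Q)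
  (rho1 : F1 -> Q) (rho2 : F2 -> Q) :
  is_free_leibniz br1 -> is_free_leibniz br2 -> is_leibniz brQ ->
  is_hom br1 brQ rho1 -> (forall q, exists x, rho1 x = q) ->
  is_hom br2 brQ rho2 -> (forall q, exists x, rho2 x = q) ->
  forall d, schur_lie_dim br1 (fun x => rho1 x = 0) d <->
            schur_lie_dim br2 (fun x => rho2 x = 0) d.
Proof.
move=> HF1 HF2 HQ Hrho1 rho1_onto Hrho2 rho2_onto.
have [al [Hal rho_al]] := free_lift HF1 HF2.1 HQ Hrho2 rho2_onto Hrho1.
have [be [Hbe rho_be]] := free_lift HF2 HF1.1 HQ Hrho1 rho1_onto Hrho2.
pose r1 x := rho1 x = 0; pose r2 x := rho2 x = 0.
have be_al_r1 x : r1 (be (al x) - x) by rewrite /r1 (is_linearB Hrho1.1) rho_be rho_al subrr.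
have al_be_r2 x : r2 (al (be x) - x) by rewrite /r2 (is_linearB Hrho2.1) rho_al rho_be subrr.
have be_al_fr1 := lie_comm_hom_congr HF1.1 (hom_comp Hal Hbe) be_al_r1.
have al_be_fr2 := lie_comm_hom_congr HF2.1 (hom_comp Hbe Hal) al_be_r2.
apply: (has_qdim_iso Hal.1).
- exact: subspace_meet (subspace_ker Hrho1.1) (lie_comm_subspace _ _ _).
- exact: lie_comm_subspace.
- move=> u [r1u ffu]; split; first by rewrite /r2 rho_al.
  exact: (lie_comm_hom Hal _ _ ffu).
- move=> u [r2u ffu]; exists (be u); split.
    by split; [rewrite /r1 rho_be | exact: (lie_comm_hom Hbe _ _ ffu)].
  by rewrite -opprB; apply: (subspaceN (lie_comm_subspace _ _ _)); exact: al_be_fr2.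
- move=> u [r1u ffu]; split=> [fr2u | fr1u]; last first.
    by apply: (lie_comm_hom Hal _ _ fr1u) => // x; rewrite /r2 rho_al.
  have fr1u' : lie_comm br1 fullset r1 (be (al u)).
    by apply: (lie_comm_hom Hbe _ _ fr2u) => // x; rewrite /r1 rho_be.
  rewrite -(subKr (be (al u)) u).
  exact: (subspaceB (lie_comm_subspace _ _ _) fr1u' (be_al_fr1 _ ffu)).
Qed.

Section FreePresentation.
Variables (K : fieldType) (G : vectType K) (brG : G -> G -> G).
Variables (F : lmodType K) (brF : F -> F -> F) (rho : F -> G).
Hypotheses (HG : is_leibniz brG) (HF : is_free_leibniz brF) (Hrho : is_hom brF brG rho).
Hypothesis rho_onto : forall y, exists x, rho x = y.
Variables (n : G -> Prop) (s : F -> Prop).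
Hypotheses (Hn : is_ideal brG n) (Hs : is_ideal brF s).
Hypothesis Hsn : forall y, n y <-> exists x, s x /\ rho x = y.

Local Notation r := (fun x => rho x = 0).
(* [rn] = ρ⁻¹(n) is the kernel of the free presentation f → g → g/n. *)
Local Notation rn := (fun x => n (rho x)).
Local Notation ff := (lie_comm brF fullset fullset).
Local Notation fr := (lie_comm brF fullset r).
Local Notation fs := (lie_comm brF fullset s).
Local Notation frfs := (addsp fr fs).
Local Notation D := (addsp fr (meet r fs)).
Local Notation E := (addsp frfs (meet r ff)).

Let HLF : is_leibniz brF := HF.1.
Let Hr : is_subspace r := subspace_ker Hrho.1.
Let Hrn : is_subspace rn := subspace_preimage Hrho.1 Hn.1.
Let Hff : is_subspace ff := lie_comm_subspace _ _ _.
Let Hfr : is_subspace fr := lie_comm_subspace _ _ _.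
Let Hfs : is_subspace fs := lie_comm_subspace _ _ _.
Let Hfrfs : is_subspace frfs := subspace_addsp Hfr Hfs.

Let fr_r x : fr x -> r x.
Proof. exact: (lie_comm_ideal (ker_hom_ideal Hrho HG)). Qed.

Let fs_s x : fs x -> s x.
Proof. exact: (lie_comm_ideal Hs). Qed.

Let fr_ff x : fr x -> ff x.
Proof. exact: lie_comm_mono. Qed.

Let fs_ff x : fs x -> ff x.
Proof. exact: lie_comm_mono. Qed.

Let rho_onto_full y : fullset y -> exists x, fullset x /\ rho x = y.
Proof. by move=> _; have [x <-] := rho_onto y; exists x. Qed.

Let s_rn x : s x -> rn x.
Proof. by move=> sx; apply/Hsn; exists x. Qed.

Let r_rn x : r x -> rn x.
Proof. by move=> /= ->; exact: subspace0 Hn.1. Qed.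

Lemma lie_comm_preimage x : lie_comm brF fullset rn x <-> addsp fr fs x.
Proof.
split=> [|[a [b [fra [fsb ->]]]]]; last first.
  apply: subspaceD; first exact: lie_comm_subspace.
    exact: lie_comm_mono fra.
  exact: lie_comm_mono fsb.
apply: span_min => // _ [m [k [_ [/Hsn [k' [sk' rhok']] ->]]]].
exists (symbr brF m (k - k')), (symbr brF m k'); split.
  by apply: lie_comm_mem => //=; rewrite (is_linearB Hrho.1) rhok' subrr.
split; first exact: lie_comm_mem.
by rewrite -(is_linearD (is_linear_symbrr HLF m)) subrK.
Qed.

Lemma has_qdim_image d :
  has_qdim (meet rn ff) E d <->
  has_qdim (meet n (lie_comm brG fullset fullset)) (lie_comm brG fullset n) d.
Proof.
apply: (has_qdim_iso Hrho.1).
- exact: subspace_meet.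
- exact: lie_comm_subspace.
- by move=> u [rnu ffu]; split=> //; exact: (lie_comm_hom Hrho _ _ ffu).
- move=> y [ny ggy]; have [x [ffx rhox]] := lie_comm_hom_lift Hrho rho_onto_full rho_onto_full ggy.
  subst y; exists x; rewrite subrr.
  by split; [split | exact: subspace0 (lie_comm_subspace _ _ _)].
move=> u [rnu ffu]; split=> [gnu | [_ [x [[a [b [fra [fsb ->]]]] [[/= rx _] ->]]]]].
  have [b [fsb rhob]] := lie_comm_hom_lift Hrho rho_onto_full (fun y ny => (Hsn y).1 ny) gnu.
  exists b, (u - b); split; first exact: (addsp_memr Hfr fsb).
  split; last by rewrite subrKC.
  by split; [rewrite /= (is_linearB Hrho.1) rhob subrr | exact: (subspaceB Hff ffu (fs_ff fsb))].
rewrite !(is_linearD Hrho.1) rx (fr_r fra) add0r addr0.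
exact: (lie_comm_hom Hrho _ _ fsb).
Qed.

Lemma has_qdim_r_fs d : has_qdim (meet r fs) (meet fr fs) d <-> has_qdim D fr d.
Proof.
have Hrfs := subspace_meet Hr Hfs.
apply: (iff_trans _ (has_qdim_addsp Hrfs Hfr d)).
by apply: has_qdim_eq => // u [_ fsu]; split=> [fru | []].
Qed.

Lemma has_qdim_r_ff d : has_qdim (meet r ff) D d <-> has_qdim E frfs d.
Proof.
have HR := subspace_meet Hr Hff.
apply: (iff_trans _ (has_qdim_addsp HR Hfrfs d)).
apply: has_qdim_eq => // u [/= ru _].
split=> [[a [b [fra [fsb uab]]]] | [a [b [fra [[_ fsb] ->]]]]]; last by exists a, b.
exists a, b; do !split=> //.
have -> : b = u - a by rewrite uab addrC addKr.
by rewrite /= (is_linearB Hrho.1) ru (fr_r fra) subrr.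
Qed.

Lemma has_qdim_exists_ff U W :
  is_subspace U -> is_subspace W -> (forall x, U x -> ff x) -> (forall x, fr x -> W x) ->
  exists d, has_qdim U W d.
Proof.
move=> HU HW Uff frW; have [k [x span_x]] := lie_comm_fin_span HLF Hrho rho_onto.
apply: (has_qdim_exists (x := x) HU HW) => u /Uff /span_x [c frc].
by exists c; exact: frW.
Qed.

Lemma has_qdim_r_ff_fr z d :
  has_qdim (meet r ff) D z -> has_qdim D fr d -> has_qdim (meet r ff) fr (z + d).
Proof.
apply: has_qdim_add.
- exact: subspace_meet.
- exact: subspace_addsp Hfr (subspace_meet Hr Hfs).
- move=> _ [a [b [fra [[rb fsb] ->]]]].
  by split; [exact: (subspaceD Hr (fr_r fra) rb) | exact: (subspaceD Hff (fr_ff fra) (fs_ff fsb))].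
- by move=> u _ fru; exact: (addsp_meml (subspace_meet Hr Hfs) fru).
Qed.

Lemma has_qdim_rn_ff_frfs d z :
  has_qdim (meet rn ff) E d -> has_qdim E frfs z -> has_qdim (meet rn ff) frfs (d + z).
Proof.
apply: has_qdim_add.
- exact: subspace_meet.
- exact: subspace_addsp Hfrfs (subspace_meet Hr Hff).
- move=> _ [_ [x [[a [b [fra [fsb ->]]]] [[rx ffx] ->]]]]; split.
    apply: (subspaceD Hrn _ (r_rn rx)).
    exact: (subspaceD Hrn (r_rn (fr_r fra)) (s_rn (fs_s fsb))).
  by apply: (subspaceD Hff _ ffx); exact: (subspaceD Hff (fr_ff fra) (fs_ff fsb)).
- by move=> u _ frfsu; exact: (addsp_meml (subspace_meet Hr Hff) frfsu).
Qed.

Lemma multiplier_dims_exist :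
  exists d1 d2 d3 d4,
  [/\ has_qdim (meet rn ff) frfs d1, has_qdim (meet r fs) (meet fr fs) d2,
      has_qdim (meet r ff) fr d3
    & has_qdim (meet n (lie_comm brG fullset fullset)) (lie_comm brG fullset n) d4].
Proof.
have HD : is_subspace D := subspace_addsp Hfr (subspace_meet Hr Hfs).
have HE : is_subspace E := subspace_addsp Hfrfs (subspace_meet Hr Hff).
have Hrnff := subspace_meet Hrn Hff.
have D_ff x : D x -> ff x.
  by move=> [a [b [fra [[_ fsb] ->]]]]; exact: (subspaceD Hff (fr_ff fra) (fs_ff fsb)).
have fr_frfs x : fr x -> frfs x by exact: addsp_meml.
have [d1 Hd1] := has_qdim_exists_ff Hrnff Hfrfs (fun x => @proj2 _ _) fr_frfs.
have [d2 Hd2] := has_qdim_exists_ff HD Hfr D_ff (fun x => id).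
have [d3 Hd3] := has_qdim_exists_ff (subspace_meet Hr Hff) Hfr (fun x => @proj2 _ _) (fun x => id).
have [d4 Hd4] := has_qdim_exists_ff Hrnff HE (fun x => @proj2 _ _)
  (fun x frx => addsp_meml (subspace_meet Hr Hff) (fr_frfs x frx)).
by exists d1, d2, d3, d4; split=> //; [exact/has_qdim_r_fs | exact/has_qdim_image].
Qed.

Lemma multiplier_dims_eq d1 d2 d3 d4 :
  has_qdim (meet rn ff) frfs d1 -> has_qdim (meet r fs) (meet fr fs) d2 ->
  has_qdim (meet r ff) fr d3 ->
  has_qdim (meet n (lie_comm brG fullset fullset)) (lie_comm brG fullset n) d4 ->
  (d1 + d2 = d3 + d4)%N.
Proof.
move=> H1 /has_qdim_r_fs H2 H3 /has_qdim_image H4.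
have HD : is_subspace D := subspace_addsp Hfr (subspace_meet Hr Hfs).
have [z Hz] := has_qdim_exists_ff (subspace_meet Hr Hff) HD (fun x => @proj2 _ _)
  (fun x => addsp_meml (subspace_meet Hr Hfs)).
rewrite (has_qdim_uniq Hfrfs H1 (has_qdim_rn_ff_frfs H4 ((has_qdim_r_ff z).1 Hz))).
by rewrite (has_qdim_uniq Hfr H3 (has_qdim_r_ff_fr Hz H2)) -addnA addnC.
Qed.

Variables (Q : lmodType K) (brQ : Q -> Q -> Q) (pi : G -> Q).
Hypotheses (HQ : is_leibniz brQ) (Hpi : is_hom brG brQ pi).
Hypotheses (pi_onto : forall z, exists y, pi y = z) (Hpi_ker : forall y, pi y = 0 <-> n y).

Lemma schur_lie_dim_quotient (F' : lmodType K) (brF' : F' -> F' -> F') (rho' : F' -> Q) :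
  is_free_leibniz brF' -> is_hom brF' brQ rho' -> (forall z, exists x, rho' x = z) ->
  forall d, schur_lie_dim brF' (fun x => rho' x = 0) d <-> has_qdim (meet rn ff) frfs d.
Proof.
move=> HF' Hrho' rho'_onto d.
have Hpirho := hom_comp Hrho Hpi.
have pirho_onto q : exists x, pi (rho x) = q.
  by have [y <-] := pi_onto q; have [x <-] := rho_onto y; exists x.
have schur_f := schur_lie_dim_presentation HF HF' HQ Hpirho pirho_onto Hrho' rho'_onto d.
apply: (iff_trans (iff_sym schur_f)).
apply: has_qdim_eq => [||u|u _].
- exact: subspace_meet (subspace_ker Hpirho.1) Hff.
- exact: Hfrfs.
- by split=> -[/Hpi_ker rnu ffu]; split=> //; apply/Hpi_ker.
split=> [/lie_comm_preimage | fu]; first by apply: lie_comm_mono => // x /Hpi_ker.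
by apply/lie_comm_preimage; apply: lie_comm_mono fu => // x /Hpi_ker.
Qed.

End FreePresentation.

Theorem mainTheorem8
  (K : fieldType) (Hhalf : (2%:R : K) != 0)
  (* g : finite-dimensional Leibniz algebra *)
  (G : vectType K) (brG : G -> G -> G) (HG : is_leibniz brG)
  (* free presentation 0 -> r -> f -> g -> 0 *)
  (F : lmodType K) (brF : F -> F -> F) (HF : is_free_leibniz brF)
  (rho : F -> G) (Hrho : is_hom brF brG rho) (Hrho_surj : forall y, exists x, rho x = y)
  (* n ideal of g, s ideal of f with rho(s) = n *)
  (n : G -> Prop) (Hn : is_ideal brG n)
  (s : F -> Prop) (Hs : is_ideal brF s)
  (Hsn : forall y, n y <-> exists x, s x /\ rho x = y)
  (* Q = g/n : surjective homomorphism pi : g -> Q with kernel n *)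
  (Q : lmodType K) (brQ : Q -> Q -> Q) (HQ : is_leibniz brQ)
  (pi : G -> Q) (Hpi : is_hom brG brQ pi) (Hpi_surj : forall z, exists y, pi y = z)
  (Hpi_ker : forall y, pi y = 0 <-> n y)
  (* a free presentation 0 -> r' -> f' -> g/n -> 0 *)
  (F' : lmodType K) (brF' : F' -> F' -> F') (HF' : is_free_leibniz brF')
  (rho' : F' -> Q) (Hrho' : is_hom brF' brQ rho') (Hrho'_surj : forall z, exists x, rho' x = z) :
  let r : F -> Prop := fun x => rho x = 0 in
  let r' : F' -> Prop := fun x => rho' x = 0 in
  let P (d1 d2 d3 d4 : nat) : Prop :=
    [/\ schur_lie_dim brF' r' d1,
        has_qdim (meet r (lie_comm brF fullset s))
                 (meet (lie_comm brF fullset r) (lie_comm brF fullset s)) d2,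
        schur_lie_dim brF r d3
      & has_qdim (meet n (lie_comm brG fullset fullset)) (lie_comm brG fullset n) d4] in
  (exists d1 d2 d3 d4, P d1 d2 d3 d4) /\
  (forall d1 d2 d3 d4, P d1 d2 d3 d4 -> (d1 + d2 = d3 + d4)%N).
Proof.
move=> r r' P.
have schur_quot := schur_lie_dim_quotient HF Hrho Hrho_surj Hn Hsn HQ Hpi Hpi_surj Hpi_ker
  HF' Hrho' Hrho'_surj.
split.
  have [d1 [d2 [d3 [d4 [H1 H2 H3 H4]]]]] := multiplier_dims_exist HG HF Hrho Hrho_surj Hn Hsn.
  by exists d1, d2, d3, d4; split=> //; apply/schur_quot.
move=> d1 d2 d3 d4 [/schur_quot H1 H2 H3 H4].
exact: (multiplier_dims_eq HG HF Hrho Hrho_surj Hn Hs Hsn H1 H2 H3 H4).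
Qed.
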